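(* Let $n\ge 2$. The set $\mathcal{S}$ of generalised Svetlichny correlators for $n$ parties (inputs $s_j\in\mathbb{Z}_{c_j}$, outputs in $\mathbb{Z}_d$, $d$ prime) equals the convex hull of the deterministic correlators $p(k|\mathbf{s})=\delta^k_{f(\mathbf{s})}$ where $f$ ranges over all bipartite linear functions $f:\mathbb{Z}_{c_1}\times\cdots\times\mathbb{Z}_{c_n}\to\mathbb{Z}_d$.
   Context: Generalised Svetlichny correlations are convex combinations, over nonempty proper subsets $\mathcal{J}\subset\{1,\dots,n\}$, of distributions $p(\mathbf{m}|\mathbf{s})=\int p(\lambda)d\lambda\; p(\mathbf{m}_{\mathcal{J}}|\mathbf{s}_{\mathcal{J}},\lambda)\,p(\mathbf{m}_{\mathcal{J}^c}|\mathbf{s}_{\mathcal{J}^c},\lambda)$, where $\mathbf{m}_{\mathcal{J}}=(m_j)_{j\in\mathcal{J}}$ etc., and the conditional distributions within each side of the partition are arbitrary (possibly signalling). Their correlators $p(k|\mathbf{s})=\sum_{\mathbf{m}:[\sum_j m_j]_d=k}p(\mathbf{m}|\mathbf{s})$ form $\mathcal{S}$; $[\cdot]_d$ is reduction mod $d$. A function $f$ is bipartite linear if for some nonempty proper $\mathcal{J}$ there are functions $f^1$ of $\mathbf{s}_{\mathcal{J}}$ and $f^2$ of $\mathbf{s}_{\mathcal{J}^c}$ into $\mathbb{Z}_d$ with $f(\mathbf{s})=[f^1(\mathbf{s}_{\mathcal{J}})+f^2(\mathbf{s}_{\mathcal{J}^c})]_d$. *)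

From HB Require Import structures.
From mathcomp Require Import all_boot all_order all_algebra.
Set Implicit Arguments. Unset Strict Implicit. Unset Printing Implicit Defensive.
Import Order.TTheory GRing.Theory Num.Theory.
Local Open Scope ring_scope.

Section Svetlichny.
Variables (R : realFieldType) (n : nat) (c : 'I_n -> nat) (d : nat).

Definition input := forall j : 'I_n, 'I_(c j).
Definition output := {ffun 'I_n -> 'I_d}.

Definition parties (J : {set 'I_n}) := {j : 'I_n | j \in J}.
Definition input_on (J : {set 'I_n}) := forall j : parties J, 'I_(c (val j)).
Definition output_on (J : {set 'I_n}) := {ffun parties J -> 'I_d}.

Definition res_in (J : {set 'I_n}) (s : input) : input_on J :=
  fun j => s (val j).
Definition res_out (J : {set 'I_n}) (m : output) : output_on J :=
  [ffun j => m (val j)].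

(* an arbitrary (possibly signalling) conditional distribution p(m_J | s_J) *)
Arguments res_in J s : clear implicits.
Arguments res_out J m : clear implicits.

Definition cond_distr (J : {set 'I_n}) (P : input_on J -> output_on J -> R) :=
  forall sJ : input_on J,
    (forall mJ, 0 <= P sJ mJ) /\ \sum_(mJ : output_on J) P sJ mJ = 1.

Definition proper_part (J : {set 'I_n}) : bool := (J != set0) && (J != setT).

Definition bilocal (J : {set 'I_n}) (p : input -> output -> R) : Prop :=
  exists (L : nat) (w : 'I_L -> R)
         (P : 'I_L -> input_on J -> output_on J -> R)
         (Q : 'I_L -> input_on (~: J) -> output_on (~: J) -> R),
    [/\ forall l, 0 <= w l,
        \sum_(l < L) w l = 1,
        forall l, cond_distr (P l),
        forall l, cond_distr (Q l) &
        forall s m, p s m = \sum_(l < L) w l * P l (res_in J s) (res_out J m)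
                                            * Q l (res_in (~: J) s) (res_out (~: J) m)].

Definition gen_svetlichny (p : input -> output -> R) : Prop :=
  exists (mu : {set 'I_n} -> R) (pJ : {set 'I_n} -> input -> output -> R),
    [/\ forall J, 0 <= mu J,
        \sum_(J : {set 'I_n}) mu J = 1,
        forall J, ~~ proper_part J -> mu J = 0,
        forall J, proper_part J -> bilocal J (pJ J) &
        forall s m, p s m = \sum_(J : {set 'I_n}) mu J * pJ J s m].

Definition correlator_of (p : input -> output -> R) (s : input) (k : 'I_d) : R :=
  \sum_(m : output | ((\sum_j (m j : nat)) %% d)%N == k) p s m.

Definition svetlichny_correlator (q : input -> 'I_d -> R) : Prop :=
  exists p, gen_svetlichny p /\ forall s k, q s k = correlator_of p s k.

Definition bipartite_linear (f : input -> 'I_d) : Prop :=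
  exists (J : {set 'I_n}) (f1 : input_on J -> 'I_d) (f2 : input_on (~: J) -> 'I_d),
    proper_part J /\
    forall s, (f s : nat) = ((f1 (res_in J s) + f2 (res_in (~: J) s)) %% d)%N.

Definition det_correlator (f : input -> 'I_d) (s : input) (k : 'I_d) : R :=
  if k == f s then 1 else 0.

Definition in_hull_bilinear (q : input -> 'I_d -> R) : Prop :=
  exists (N : nat) (w : 'I_N -> R) (f : 'I_N -> input -> 'I_d),
    [/\ forall i, 0 <= w i,
        \sum_(i < N) w i = 1,
        forall i, bipartite_linear (f i) &
        forall s k, q s k = \sum_(i < N) w i * det_correlator (f i) s k].

End Svetlichny.

From HB Require Import structures.
From mathcomp Require Import all_boot all_order all_algebra.
From Stdlib Require Import FunctionalExtensionality ClassicalEpsilon.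
Set Implicit Arguments. Unset Strict Implicit. Unset Printing Implicit Defensive.
Import Order.TTheory GRing.Theory Num.Theory.
Local Open Scope ring_scope.

(* A bilocal strategy for a cut J | J^c is a mixture of products of local conditional
   distributions, and a conditional distribution on finite sets is a mixture of
   deterministic response functions (expand the product over inputs of the row sums).
   For deterministic responses r1, r2 the output sum mod d is the bipartite linear
   function s |-> (sum r1(s_J) + sum r2(s_J^c)) mod d, so every Svetlichny correlator lies
   in the hull.  Conversely f = f1 + f2 mod d is produced by one party of J outputting
   f1(s_J), one party of J^c outputting f2(s_J^c) and everybody else 0; a convex
   combination of such strategies is a Svetlichny correlation once its terms are grouped
   by their cut. *)

Section Join.
Variables (n : nat) (T : 'I_n -> Type) (J : {set 'I_n}).
Variables (a : forall x : parties J, T (val x)) (b : forall y : parties (~: J), T (val y)).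

Lemma notin_setC (j : 'I_n) : (j \in J) = false -> j \in ~: J.
Proof. by rewrite in_setC => ->. Qed.

Definition join (j : 'I_n) : T j :=
  match j \in J as t return (j \in J) = t -> T j with
  | true => fun jJ => a (exist _ j jJ)
  | false => fun jJ => b (exist _ j (notin_setC jJ))
  end (erefl _).

Lemma join_in (x : parties J) : join (val x) = a x.
Proof.
case: x => j jJ; rewrite /join /=.
move: (erefl (j \in J)); rewrite {2 3}jJ => e.
by rewrite (bool_irrelevance e jJ).
Qed.

Lemma join_out (y : parties (~: J)) : join (val y) = b y.
Proof.
case: y => j jK; rewrite /join /=.
have jJ : (j \in J) = false by rewrite in_setC in jK; apply: negbTE.
move: (erefl (j \in J)); rewrite {2 3}jJ => e.
by rewrite (bool_irrelevance (notin_setC e) jK).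
Qed.

Lemma eq_join (m : forall j, T j) :
  (forall x : parties J, m (val x) = a x) -> (forall y : parties (~: J), m (val y) = b y) ->
  forall j, join j = m j.
Proof.
move=> ma mb j; case jJ: (j \in J).
- exact: etrans (join_in (exist _ j jJ)) (esym (ma _)).
- exact: etrans (join_out (exist _ j (notin_setC jJ))) (esym (mb _)).
Qed.

End Join.

Section Glue.
Variables (n d : nat) (J : {set 'I_n}).

Definition glue (a : output_on d J) (b : output_on d (~: J)) : output n d :=
  [ffun j => join (T := fun _ => 'I_d) (fun x => a x) (fun y => b y) j].

Lemma res_out_glueP (a : output_on d J) (b : output_on d (~: J)) (m : output n d) :
  (res_out J m == a) && (res_out (~: J) m == b) = (m == glue a b).
Proof.
apply/andP/eqP => [[/eqP <- /eqP <-] | ->].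
  by apply/ffunP => j; rewrite ffunE; symmetry; apply: eq_join => x; rewrite ffunE.
by split; apply/eqP/ffunP => x; rewrite !ffunE ?join_in ?join_out.
Qed.

Lemma sum_glue (a : output_on d J) (b : output_on d (~: J)) :
  (\sum_j (glue a b j : nat) = \sum_x (a x : nat) + \sum_y (b y : nat))%N.
Proof.
rewrite (bigID (mem J)) /= [X in (_ + X)%N](eq_bigl (mem (~: J))); last first.
  by move=> j; rewrite /= in_setC.
rewrite (big_sub J) (big_sub (~: J)); congr addn; apply: eq_bigr => x _;
  rewrite ffunE; congr (nat_of_ord _); [exact: join_in | exact: join_out].
Qed.

Lemma sum_indicator_glue (R : pzSemiRingType) (Pm : pred (output n d))
    (a : output_on d J) (b : output_on d (~: J)) :
  \sum_(m | Pm m) ((res_out J m == a)%:R * (res_out (~: J) m == b)%:R : R)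
  = (Pm (glue a b))%:R.
Proof.
under eq_bigr do rewrite -natrM mulnb res_out_glueP.
rewrite big_mkcond (bigD1 (glue a b)) //= eqxx big1 ?addr0; first by case: Pm.
by move=> m /negbTE ->; case: Pm.
Qed.

End Glue.

Section DeterministicMixture.
Variables (R : numDomainType) (X Y : finType) (P : X -> Y -> R).

Definition det_weight (g : {ffun X -> Y}) : R := \prod_x P x (g x).

Lemma det_weight_ge0 g : (forall x y, 0 <= P x y) -> 0 <= det_weight g.
Proof. by move=> P_ge0; apply: prodr_ge0 => x _. Qed.

Hypothesis P_sum1 : forall x, \sum_y P x y = 1.

Lemma sum_det_weight : \sum_g det_weight g = 1.
Proof. by rewrite -(@bigA_distr_bigA R 0 1 *%R +%R X Y); apply: big1. Qed.

(* Expand [\prod_x \sum_y P' x y] with [P' x0 y = P x0 y * (y == y0)] and [P' x = P x] elsewhere. *)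
Lemma det_weight_mixture x0 y0 :
  P x0 y0 = \sum_g det_weight g * (g x0 == y0)%:R.
Proof.
have := @bigA_distr_bigA R 0 1 *%R +%R X Y
  (fun x y => P x y * (if x == x0 then (y == y0)%:R else 1)).
rewrite (bigD1 x0) //= eqxx [X in _ * X = _ -> _]big1; last first.
  by move=> x /negbTE ->; under eq_bigr do rewrite mulr1.
rewrite mulr1 (bigD1 y0) //= eqxx mulr1 [X in _ + X = _ -> _]big1 ?addr0; last first.
  by move=> y /negbTE ->; rewrite mulr0.
move=> ->; apply: eq_bigr => g _; rewrite big_split /=; congr (_ * _).
by rewrite (bigD1 x0) //= eqxx big1 ?mulr1 // => x /negbTE ->.
Qed.

End DeterministicMixture.

Section LocalResponses.
Variables (R : realFieldType) (n : nat) (c : 'I_n -> nat) (d : nat) (J : {set 'I_n}).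

Definition local_product (P : input_on c J -> output_on d J -> R)
    (Q : input_on c (~: J) -> output_on d (~: J) -> R) (s : input c) (m : output n d) : R :=
  P (res_in s) (res_out J m) * Q (res_in s) (res_out (~: J) m).

Definition det_response (K : {set 'I_n}) (r : input_on c K -> output_on d K)
    (sK : input_on c K) (mK : output_on d K) : R :=
  (mK == r sK)%:R.

Lemma cond_distr_det_response K (r : input_on c K -> output_on d K) :
  cond_distr (det_response r).
Proof.
move=> sK; split=> [mK|]; first exact: ler0n.
by rewrite /det_response (bigD1 (r sK)) //= eqxx big1 ?addr0 // => mK /negbTE ->.
Qed.

(* A finite copy of the function type [input_on c K], so that deterministic local
   strategies range over a finite type. *)
Definition input_tuple (K : {set 'I_n}) := {dffun forall j : parties K, 'I_(c (val j))}.
Definition tuple_of_input K (sK : input_on c K) : input_tuple K := [ffun j => sK j].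
Definition input_of_tuple K (x : input_tuple K) : input_on c K := fun j => x j.

Lemma tuple_of_inputK K : cancel (@tuple_of_input K) (@input_of_tuple K).
Proof.
by move=> sK; apply: functional_extensionality_dep => j; rewrite /input_of_tuple ffunE.
Qed.

Definition det_strategy_weight K (P : input_on c K -> output_on d K -> R)
    (g : {ffun input_tuple K -> output_on d K}) : R :=
  det_weight (fun x => P (input_of_tuple x)) g.

Definition det_strategy K (g : {ffun input_tuple K -> output_on d K}) (sK : input_on c K) :=
  g (tuple_of_input sK).

Lemma cond_distr_mixture K (P : input_on c K -> output_on d K -> R) :
  cond_distr P -> forall sK mK,
  P sK mK = \sum_g det_strategy_weight P g * det_response (det_strategy g) sK mK.
Proof.
move=> HP sK mK; rewrite /det_strategy_weight -{1}(tuple_of_inputK sK).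
rewrite (det_weight_mixture (P := fun x => P (input_of_tuple x))) => [|x].
  by apply: eq_bigr => g _; rewrite /det_response eq_sym.
by case: (HP (input_of_tuple x)).
Qed.

Lemma local_product_mixture P Q : cond_distr P -> cond_distr Q -> forall s m,
  local_product P Q s m =
  \sum_(gh : {ffun input_tuple J -> output_on d J} *
             {ffun input_tuple (~: J) -> output_on d (~: J)})
    det_strategy_weight P gh.1 * det_strategy_weight Q gh.2 *
    local_product (det_response (det_strategy gh.1)) (det_response (det_strategy gh.2)) s m.
Proof.
move=> HP HQ s m; rewrite /local_product (cond_distr_mixture HP) (cond_distr_mixture HQ).
rewrite big_distrlr pair_bigA /=.
by apply: eq_bigr => -[g h] _; rewrite mulrACA.
Qed.

End LocalResponses.

Section Correlators.
Variables (R : realFieldType) (n : nat) (c : 'I_n -> nat) (d : nat).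
Hypothesis d_gt0 : (0 < d)%N.

Lemma correlator_of_mix (I : Type) (r : seq I) (a : I -> R)
    (p : input c -> output n d -> R) (p' : I -> input c -> output n d -> R) :
  (forall s m, p s m = \sum_(i <- r) a i * p' i s m) ->
  forall s k, correlator_of p s k = \sum_(i <- r) a i * correlator_of (p' i) s k.
Proof.
move=> pE s k; rewrite /correlator_of; under eq_bigr do rewrite pE.
by rewrite exchange_big; apply: eq_bigr => i _; rewrite mulr_sumr.
Qed.

Definition bilinear_of (J : {set 'I_n}) (r1 : input_on c J -> output_on d J)
    (r2 : input_on c (~: J) -> output_on d (~: J)) (s : input c) : 'I_d :=
  Ordinal (ltn_pmod (\sum_x (r1 (res_in s) x : nat) + \sum_y (r2 (res_in s) y : nat)) d_gt0).

Lemma bipartite_linear_of J r1 r2 : proper_part J -> bipartite_linear (@bilinear_of J r1 r2).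
Proof.
move=> pJ; exists J, (fun sJ => Ordinal (ltn_pmod (\sum_x (r1 sJ x : nat)) d_gt0)).
exists (fun sK => Ordinal (ltn_pmod (\sum_y (r2 sK y : nat)) d_gt0)).
by split=> // s; rewrite /= modnDm.
Qed.

Lemma correlator_det_product J r1 r2 s k :
  correlator_of (local_product (det_response R r1) (det_response R r2)) s k =
  det_correlator R (@bilinear_of J r1 r2) s k.
Proof.
rewrite /correlator_of /local_product /det_response sum_indicator_glue sum_glue.
by rewrite /det_correlator eq_sym -val_eqE; case: eqP.
Qed.

End Correlators.

Section BilinearCone.
Variables (R : realFieldType) (n : nat) (c : 'I_n -> nat) (d : nat).

(* Unnormalised hull: [bilinear_cone 1] is exactly [in_hull_bilinear]. *)
Definition bilinear_cone (t : R) (q : input c -> 'I_d -> R) : Prop :=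
  exists (N : nat) (w : 'I_N -> R) (f : 'I_N -> input c -> 'I_d),
    [/\ forall i, 0 <= w i, \sum_(i < N) w i = t,
        forall i, bipartite_linear (f i) &
        forall s k, q s k = \sum_(i < N) w i * det_correlator R (f i) s k].

Lemma bilinear_cone_eq t q q' :
  bilinear_cone t q -> (forall s k, q s k = q' s k) -> bilinear_cone t q'.
Proof.
by move=> [N [w [f [w0 wt fL qE]]]] qq'; exists N, w, f; split=> // s k; rewrite -qq'.
Qed.

Lemma bilinear_cone0 : bilinear_cone 0 (fun _ _ => 0).
Proof.
have f (i : 'I_0) : input c -> 'I_d by case: i => ? /[!ltn0].
by exists 0%N, (fun _ => 0), f; split=> [_||[]|s k]; rewrite ?big_ord0.
Qed.

Lemma bilinear_cone_det f : bipartite_linear f -> bilinear_cone 1 (det_correlator R f).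
Proof.
exists 1%N, (fun _ => 1), (fun _ => f).
by split=> [_||//|s k]; rewrite ?ler01 ?big_ord1 ?mul1r.
Qed.

Lemma bilinear_coneZ a t q : 0 <= a -> bilinear_cone t q ->
  bilinear_cone (a * t) (fun s k => a * q s k).
Proof.
move=> a0 [N [w [f [w0 wt fL qE]]]]; exists N, (fun i => a * w i), f; split=> //.
- by move=> i; rewrite mulr_ge0.
- by rewrite -mulr_sumr wt.
- by move=> s k; rewrite qE mulr_sumr; apply: eq_bigr => i _; rewrite mulrA.
Qed.

Lemma bilinear_coneD t1 t2 q1 q2 : bilinear_cone t1 q1 -> bilinear_cone t2 q2 ->
  bilinear_cone (t1 + t2) (fun s k => q1 s k + q2 s k).
Proof.
move=> [N1 [w1 [f1 [w10 wt1 fL1 qE1]]]] [N2 [w2 [f2 [w20 wt2 fL2 qE2]]]].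
pose pick T (x1 : 'I_N1 -> T) (x2 : 'I_N2 -> T) i :=
  match split i with inl i1 => x1 i1 | inr i2 => x2 i2 end.
exists (N1 + N2)%N, (pick _ w1 w2), (pick _ f1 f2); split.
- by move=> i; rewrite /pick; case: split.
- by rewrite big_split_ord /pick -wt1 -wt2; congr (_ + _); apply: eq_bigr => i _;
    rewrite ?(unsplitK (inl i)) ?(unsplitK (inr i)).
- by move=> i; rewrite /pick; case: split.
- move=> s k; rewrite big_split_ord qE1 qE2 /pick; congr (_ + _); apply: eq_bigr => i _;
    by rewrite ?(unsplitK (inl i)) ?(unsplitK (inr i)).
Qed.

Lemma bilinear_cone_comb (I : Type) {r : seq I} (a : I -> R)
    (F : I -> input c -> 'I_d -> R) :
  (forall i, 0 <= a i) -> (forall i, a i != 0 -> bilinear_cone 1 (F i)) ->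
  bilinear_cone (\sum_(i <- r) a i) (fun s k => \sum_(i <- r) a i * F i s k).
Proof.
move=> a_ge0 FC; elim: r => [|i r IH].
  by rewrite big_nil; apply: bilinear_cone_eq bilinear_cone0 _ => s k; rewrite big_nil.
rewrite big_cons; apply: bilinear_cone_eq (bilinear_coneD _ IH) _ => [|s k]; last first.
  by rewrite big_cons.
have [->|ai0] := eqVneq (a i) 0.
  by apply: bilinear_cone_eq bilinear_cone0 _ => s k; rewrite mul0r.
by rewrite -{1}[a i]mulr1; apply: bilinear_coneZ; [exact: a_ge0 | exact: FC].
Qed.

End BilinearCone.

Section SvetlichnyInHull.
Variables (R : realFieldType) (n : nat) (c : 'I_n -> nat) (d : nat).
Hypothesis d_gt0 : (0 < d)%N.

Lemma local_product_cone J (P : input_on c J -> output_on d J -> R)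
    (Q : input_on c (~: J) -> output_on d (~: J) -> R) :
  proper_part J -> cond_distr P -> cond_distr Q ->
  bilinear_cone 1 (correlator_of (local_product P Q)).
Proof.
move=> pJ HP HQ.
have P_ge0 x y : 0 <= P (input_of_tuple x) y by case: (HP (input_of_tuple x)).
have Q_ge0 x y : 0 <= Q (input_of_tuple x) y by case: (HQ (input_of_tuple x)).
have weight1 : \sum_(gh : {ffun input_tuple c J -> output_on d J} *
                           {ffun input_tuple c (~: J) -> output_on d (~: J)})
                  det_strategy_weight P gh.1 * det_strategy_weight Q gh.2 = 1.
  rewrite -(pair_bigA _ (fun g h => det_strategy_weight P g * det_strategy_weight Q h)).
  rewrite -big_distrlr /= !sum_det_weight ?mulr1 // => x.
    by case: (HQ (input_of_tuple x)).
  by case: (HP (input_of_tuple x)).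
rewrite -weight1; apply: bilinear_cone_eq (bilinear_cone_comb (F := fun gh =>
  correlator_of (local_product (det_response R (det_strategy gh.1))
                               (det_response R (det_strategy gh.2)))) _ _) _.
- by move=> gh; rewrite mulr_ge0 ?det_weight_ge0.
- move=> gh _.
  apply: bilinear_cone_eq (bilinear_cone_det R (bipartite_linear_of d_gt0 _ _ pJ)) _.
  by move=> s k; rewrite correlator_det_product.
- by move=> s k; rewrite (correlator_of_mix (local_product_mixture HP HQ)).
Qed.

Lemma bilocal_cone (J : {set 'I_n}) (p : input c -> output n d -> R) :
  proper_part J -> bilocal J p -> bilinear_cone 1 (correlator_of p).
Proof.
move=> pJ [L [w [P [Q [w_ge0 w1 HP HQ pE]]]]]; rewrite -w1.
have lC l : w l != 0 -> _ := fun _ => local_product_cone pJ (HP l) (HQ l).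
apply: bilinear_cone_eq (bilinear_cone_comb w_ge0 lC) _.
move=> s k; apply/esym/correlator_of_mix => s' m.
by rewrite pE; apply: eq_bigr => l _; rewrite mulrA.
Qed.

Lemma svetlichny_in_hull (q : input c -> 'I_d -> R) :
  svetlichny_correlator q -> in_hull_bilinear q.
Proof.
move=> [p [[mu [pJ [mu_ge0 mu1 mu_improper pJ_bilocal pE]]] qE]].
have mu_proper J : mu J != 0 -> proper_part J.
  by apply: contraR => /mu_improper ->; rewrite eqxx.
rewrite /in_hull_bilinear -mu1.
apply: bilinear_cone_eq (bilinear_cone_comb mu_ge0 _) _ => [J /mu_proper pJJ|s k].
  exact: bilocal_cone pJJ (pJ_bilocal J pJJ).
by rewrite qE (correlator_of_mix pE).
Qed.

End SvetlichnyInHull.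

Section Regroup.
Variables (R : numFieldType) (T : finType) (N : nat) (w : 'I_N -> R) (lab : 'I_N -> T).
Hypotheses (w_ge0 : forall i, 0 <= w i) (w_sum1 : \sum_i w i = 1).

Definition group_weight (t : T) : R := \sum_i w i * (lab i == t)%:R.

(* For an empty group any probability vector will do; we reuse [w]. *)
Definition cond_weight (t : T) (i : 'I_N) : R :=
  if group_weight t == 0 then w i else w i * (lab i == t)%:R / group_weight t.

Lemma group_weight_ge0 t : 0 <= group_weight t.
Proof. by apply: sumr_ge0 => i _; rewrite mulr_ge0 ?ler0n. Qed.

Lemma sum_group_weight : \sum_t group_weight t = 1.
Proof.
rewrite exchange_big -[RHS]w_sum1; apply: eq_bigr => i _; rewrite -mulr_sumr.
by rewrite (bigD1 (lab i)) //= eqxx big1 ?addr0 ?mulr1 // => t /negbTE; rewrite eq_sym => ->.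
Qed.

Lemma group_weight_eq0 t : (forall i, lab i != t) -> group_weight t = 0.
Proof. by move=> lab_t; apply: big1 => i _; rewrite (negbTE (lab_t i)) mulr0. Qed.

Lemma cond_weight_ge0 t i : 0 <= cond_weight t i.
Proof.
rewrite /cond_weight; case: eqP => // _.
by rewrite divr_ge0 ?mulr_ge0 ?ler0n ?group_weight_ge0.
Qed.

Lemma sum_cond_weight t : \sum_i cond_weight t i = 1.
Proof. by rewrite /cond_weight; case: eqP => // /eqP nz; rewrite -mulr_suml mulfV. Qed.

Lemma group_cond_weight t i : group_weight t * cond_weight t i = w i * (lab i == t)%:R.
Proof.
rewrite /cond_weight; case: eqP => [z|/eqP nz]; last by rewrite mulrCA mulfV ?mulr1.
rewrite z mul0r; symmetry; apply: (psumr_eq0P _ z) => // j _.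
by rewrite mulr_ge0 ?ler0n.
Qed.

Lemma regroup_sum (F : T -> 'I_N -> R) :
  \sum_t group_weight t * \sum_i cond_weight t i * F t i = \sum_i w i * F (lab i) i.
Proof.
under eq_bigr do rewrite mulr_sumr.
rewrite exchange_big; apply: eq_bigr => i _.
under eq_bigr do rewrite mulrA group_cond_weight.
rewrite (bigD1 (lab i)) //= eqxx mulr1 big1 ?addr0 // => t /negbTE.
by rewrite eq_sym => ->; rewrite mulr0 mul0r.
Qed.

End Regroup.

Lemma bipartite_linear_choice (n : nat) (c : 'I_n -> nat) (d N : nat)
    (f : 'I_N -> input c -> 'I_d) :
  (forall i, bipartite_linear (f i)) ->
  exists (lab : 'I_N -> {set 'I_n}) (f1 : forall i, input_on c (lab i) -> 'I_d)
         (f2 : forall i, input_on c (~: lab i) -> 'I_d),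
    forall i, proper_part (lab i) /\
      forall s, (f i s : nat) = ((f1 i (res_in s) + f2 i (res_in s)) %% d)%N.
Proof.
move=> fL.
have [|g gP] := choice (fun i (t : {J : {set 'I_n} &
                                 ((input_on c J -> 'I_d) * (input_on c (~: J) -> 'I_d))%type}) =>
  proper_part (tag t) /\
  forall s, (f i s : nat) = (((tagged t).1 (res_in s) + (tagged t).2 (res_in s)) %% d)%N).
  by move=> i; have [J [f1 [f2 fE]]] := fL i; exists (existT _ J (f1, f2)).
by exists (fun i => tag (g i)), (fun i => (tagged (g i)).1), (fun i => (tagged (g i)).2).
Qed.

Section HullInSvetlichny.
Variables (R : realFieldType) (n : nat) (c : 'I_n -> nat) (d : nat).
Hypotheses (d_gt0 : (0 < d)%N) (c_gt0 : forall j, (0 < c j)%N).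

Definition extend_input (J : {set 'I_n}) (sJ : input_on c J) : input c :=
  join sJ (fun y : parties (~: J) => Ordinal (c_gt0 (val y))).

Lemma res_in_extend J (sJ : input_on c J) : res_in (extend_input sJ) = sJ.
Proof. by apply: functional_extensionality_dep => x; exact: join_in. Qed.

(* One chosen party of [J] outputs [v], all others [0], so the outputs sum to [v]. *)
Definition single_output (J : {set 'I_n}) (v : 'I_d) : output_on d J :=
  [ffun x => if Some x == [pick y : parties J] then v else Ordinal d_gt0].

Lemma sum_single_output J v : J != set0 -> (\sum_x (single_output J v x : nat))%N = v.
Proof.
case/set0Pn => j jJ; rewrite /single_output.
case: pickP => [x0 _ | none]; last by have := none (exist _ j jJ).
rewrite (bigD1 x0) //= ffunE eqxx big1 ?addn0 // => x x_neq0.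
by rewrite ffunE (inj_eq Some_inj) (negbTE x_neq0).
Qed.

Lemma bilinear_of_single_output J (r1 : input_on c J -> output_on d J)
    (r2 : input_on c (~: J) -> output_on d (~: J)) f1 f2 (f : input c -> 'I_d) :
  proper_part J ->
  (forall sJ, r1 sJ = single_output J (f1 sJ)) ->
  (forall sK, r2 sK = single_output (~: J) (f2 sK)) ->
  (forall s, (f s : nat) = ((f1 (res_in s) + f2 (res_in s)) %% d)%N) ->
  forall s, bilinear_of d_gt0 r1 r2 s = f s.
Proof.
case/andP=> J_neq0 J_neqT r1E r2E fE s; apply: val_inj.
rewrite /= fE r1E r2E !sum_single_output //.
by apply: contra J_neqT => /eqP K0; rewrite -(setCK J) K0 setC0.
Qed.

Lemma hull_in_svetlichny (q : input c -> 'I_d -> R) :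
  in_hull_bilinear q -> svetlichny_correlator q.
Proof.
move=> [N [w [f [w_ge0 w1 fL qE]]]].
have [lab [f1 [f2 fE]]] := bipartite_linear_choice fL.
pose mu := group_weight w lab; pose w' := cond_weight w lab.
(* Strategy [i] only carries weight in the block [J = lab i]; elsewhere [extend_input]
   merely makes [f1 i] and [f2 i] well-typed. *)
pose r1 J i (sJ : input_on c J) := single_output J (f1 i (res_in (extend_input sJ))).
pose r2 J i (sK : input_on c (~: J)) :=
  single_output (~: J) (f2 i (res_in (extend_input sK))).
pose pJ J := fun s m => \sum_i w' J i *
  local_product (det_response R (r1 J i)) (det_response R (r2 J i)) s m.
exists (fun s m => \sum_J mu J * pJ J s m); split.
  exists mu, pJ; split=> //.
  - exact: group_weight_ge0.
  - exact: sum_group_weight.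
  - move=> J J_improper; apply: group_weight_eq0 => i.
    by apply: contraNneq J_improper => <-; case: (fE i).
  - move=> J _; exists N, (w' J), (fun i => det_response R (r1 J i)).
    exists (fun i => det_response R (r2 J i)); split=> //.
    + exact: cond_weight_ge0.
    + exact: sum_cond_weight.
    + by move=> i; apply: cond_distr_det_response.
    + by move=> i; apply: cond_distr_det_response.
    + by move=> s m; apply: eq_bigr => i _; rewrite mulrA.
move=> s k; rewrite (correlator_of_mix (fun s m => erefl)).
under eq_bigr do rewrite (correlator_of_mix (fun s m => erefl)).
rewrite regroup_sum // qE; apply: eq_bigr => i _.
rewrite correlator_det_product /det_correlator; have [lab_i fiE] := fE i.
rewrite (bilinear_of_single_output lab_i _ _ fiE) // => ?.
  by rewrite /r1 res_in_extend.
by rewrite /r2 res_in_extend.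
Qed.

End HullInSvetlichny.

Unset Implicit Arguments.

Theorem theorem2p4p1 (R : realFieldType) (n : nat) (c : 'I_n -> nat) (d : nat)
  (hn : (2 <= n)%N) (hc : forall j, (0 < c j)%N) (hd : prime d)
  (q : input c -> 'I_d -> R) :
  svetlichny_correlator q <-> in_hull_bilinear q.
Proof.
have d_gt0 : (0 < d)%N := prime_gt0 hd.
split; [exact: svetlichny_in_hull d_gt0 q | exact: hull_in_svetlichny d_gt0 hc q].
Qed.
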